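(* Let $S$ be a Stone relation algebra. Then: 1. For all ideal-points $p,q\in S$ with $p\neq q$: $p\sqcap q=\bot$ and $p^{\smile}q=\bot$. 2. If $S$ is simple, then every point of $S$ is an ideal-point. 3. An element $p\in S$ is an ideal-point if and only if $p$ is a point and for every point $q\in S$, $q\sqsubseteq p$ or $q\sqsubseteq\overline{p}$.
   Context: A Stone relation algebra is a structure $(S,\sqcup,\sqcap,\cdot,\overline{\,\cdot\,},{}^{\smile},\bot,\top,1)$ (write $xy$ for $x\cdot y$, $\overline{x}$ for the pseudocomplement, $x^{\smile}$ for the converse) such that: $(S,\sqcup,\sqcap,\bot,\top)$ is a bounded distributive lattice with order $x\sqsubseteq y\iff x\sqcup y=y$; $x\sqcap y=\bot\iff x\sqsubseteq\overline{y}$; $\overline{x}\sqcup\overline{\overline{x}}=\top$; $\cdot$ is associative with two-sided unit $1$, distributes over $\sqcup$ on both sides, and $\bot$ is a zero of $\cdot$; $x^{\smile\smile}=x$, $(xy)^{\smile}=y^{\smile}x^{\smile}$, $(x\sqcup y)^{\smile}=x^{\smile}\sqcup y^{\smile}$; $\overline{\overline{1}}=1$; $\overline{\overline{xy}}=\overline{\overline{x}}\,\overline{\overline{y}}$; $xy\sqcap z\sqsubseteq x(y\sqcap x^{\smile}z)$. $x$ is injective if $xx^{\smile}\sqsubseteq1$, surjective if $1\sqsubseteq x^{\smile}x$, a vector if $x\top=x$, a covector if $\top x=x$, an ideal if it is a vector and a covector, a point if it is an injective surjective vector, and simple if $\top x\top=\top$. $S$ is simple if every element other than $\bot$ is simple.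 An ideal-point is a point $p$ such that for all points $q$ and all ideals $x\neq\bot$, $qx\sqsubseteq p$ implies $q\sqsubseteq p$. *)

Record StoneRelAlg : Type := {
  car :> Type;
  sup : car -> car -> car;
  inf : car -> car -> car;
  comp : car -> car -> car;
  pc : car -> car;
  conv : car -> car;
  bot : car;
  top : car;
  one : car;
  sup_assoc : forall x y z, sup x (sup y z) = sup (sup x y) z;
  sup_comm : forall x y, sup x y = sup y x;
  inf_assoc : forall x y z, inf x (inf y z) = inf (inf x y) z;
  inf_comm : forall x y, inf x y = inf y x;
  sup_absorb : forall x y, sup x (inf x y) = x;
  inf_absorb : forall x y, inf x (sup x y) = x;
  inf_sup_distr : forall x y z, inf x (sup y z) = sup (inf x y) (inf x z);
  sup_bot : forall x, sup x bot = x;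
  inf_top : forall x, inf x top = x;
  pc_spec : forall x y, inf x y = bot <-> sup x (pc y) = pc y;
  stone : forall x, sup (pc x) (pc (pc x)) = top;
  comp_assoc : forall x y z, comp x (comp y z) = comp (comp x y) z;
  comp_one_l : forall x, comp one x = x;
  comp_one_r : forall x, comp x one = x;
  comp_sup_l : forall x y z, comp (sup x y) z = sup (comp x z) (comp y z);
  comp_sup_r : forall x y z, comp x (sup y z) = sup (comp x y) (comp x z);
  comp_bot_l : forall x, comp bot x = bot;
  comp_bot_r : forall x, comp x bot = bot;
  conv_invol : forall x, conv (conv x) = x;
  conv_comp : forall x y, conv (comp x y) = comp (conv y) (conv x);
  conv_sup : forall x y, conv (sup x y) = sup (conv x) (conv y);
  pp_one : pc (pc one) = one;
  pp_comp : forall x y, pc (pc (comp x y)) = comp (pc (pc x)) (pc (pc y));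
  dedekind : forall x y z,
    sup (inf (comp x y) z) (comp x (inf y (comp (conv x) z)))
    = comp x (inf y (comp (conv x) z))
}.

Section Defs.
Variable S : StoneRelAlg.

Definition le (x y : S) : Prop := sup S x y = y.

Definition injective (x : S) : Prop := le (comp S x (conv S x)) (one S).
Definition surjective (x : S) : Prop := le (one S) (comp S (conv S x) x).
Definition vector (x : S) : Prop := comp S x (top S) = x.
Definition covector (x : S) : Prop := comp S (top S) x = x.
Definition ideal (x : S) : Prop := vector x /\ covector x.
Definition point (x : S) : Prop := injective x /\ surjective x /\ vector x.
Definition simple_elt (x : S) : Prop := comp S (comp S (top S) x) (top S) = top S.
Definition ideal_point (p : S) : Prop :=
  point p /\
  forall q x : S, point q -> ideal x -> x <> bot S ->
    le (comp S q x) p -> le q p.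
End Defs.

Definition simple_alg (S : StoneRelAlg) : Prop :=
  forall x : S, x <> bot S -> simple_elt S x.

(** For an ideal-point p and a point q, either q ⊓ p = ⊥, so q ⊑ p̄, or the
    ideal x = ⊤(q ⊓ p) is nonzero; then the Dedekind law and injectivity of q
    give qx ⊑ q ⊓ ⊤(q ⊓ p) ⊑ q q˘ p ⊑ p, hence q ⊑ p.  Conversely, if q ⊑ p̄
    and qx ⊑ p then qx = ⊥, and x ⊑ q˘qx = ⊥ by surjectivity of q.
    Comparable points are equal, so distinct ideal-points are disjoint, and
    then p˘q ⊑ p˘(q ⊓ p⊤) = p˘(q ⊓ p) = ⊥.  In a simple algebra the only
    nonzero ideal is ⊤ and q⊤ = q, which makes every point an ideal-point. *)

From Stdlib Require Import Classical.

Section StoneRelationAlgebra.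
Variable S : StoneRelAlg.
Implicit Types x y z p q r : S.

Local Notation "x ⊑ y" := (le S x y) (at level 70).
Local Notation "x ⊔ y" := (sup S x y) (at level 50, left associativity).
Local Notation "x ⊓ y" := (inf S x y) (at level 50, left associativity).
Local Notation "x ⋅ y" := (comp S x y) (at level 40, left associativity).
Local Notation "⊤" := (top S).
Local Notation "⊥" := (bot S).

Lemma sup_idem x : x ⊔ x = x.
Proof.
  pose proof (sup_absorb S x (x ⊔ x)) as H.
  rewrite inf_absorb in H. exact H.
Qed.

Lemma le_refl x : x ⊑ x.
Proof. apply sup_idem. Qed.

Lemma le_trans x y z : x ⊑ y -> y ⊑ z -> x ⊑ z.
Proof. unfold le. intros Hxy Hyz. rewrite <- Hyz, sup_assoc, Hxy. reflexivity. Qed.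

Lemma le_antisym x y : x ⊑ y -> y ⊑ x -> x = y.
Proof. unfold le. intros Hxy Hyx. rewrite <- Hxy, sup_comm. symmetry. exact Hyx. Qed.

Lemma le_iff_inf x y : x ⊑ y <-> x ⊓ y = x.
Proof.
  split; intro H.
  - rewrite <- H. apply inf_absorb.
  - unfold le. rewrite <- H, sup_comm, inf_comm. apply sup_absorb.
Qed.

Lemma inf_le_l x y : x ⊓ y ⊑ x.
Proof.
  apply le_iff_inf. rewrite inf_comm, inf_assoc.
  pose proof (inf_absorb S x (x ⊓ y)) as Hidem. rewrite sup_absorb in Hidem.
  rewrite Hidem. reflexivity.
Qed.

Lemma inf_le_r x y : x ⊓ y ⊑ y.
Proof. rewrite inf_comm. apply inf_le_l. Qed.

Lemma le_inf x y z : x ⊑ y -> x ⊑ z -> x ⊑ y ⊓ z.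
Proof. rewrite !le_iff_inf. intros Hy Hz. rewrite inf_assoc, Hy, Hz. reflexivity. Qed.

Lemma le_top x : x ⊑ ⊤.
Proof. apply le_iff_inf, inf_top. Qed.

Lemma le_bot_eq x : x ⊑ ⊥ -> x = ⊥.
Proof. unfold le. rewrite sup_bot. trivial. Qed.

Lemma le_pc_iff x y : x ⊑ pc S y <-> x ⊓ y = ⊥.
Proof. symmetry. apply pc_spec. Qed.

Lemma inf_pc x : x ⊓ pc S x = ⊥.
Proof. rewrite inf_comm. apply le_pc_iff, le_refl. Qed.

Lemma comp_mono_l x y z : x ⊑ y -> x ⋅ z ⊑ y ⋅ z.
Proof. unfold le. intro H. rewrite <- comp_sup_l, H. reflexivity. Qed.

Lemma comp_mono_r x y z : x ⊑ y -> z ⋅ x ⊑ z ⋅ y.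
Proof. unfold le. intro H. rewrite <- comp_sup_r, H. reflexivity. Qed.

Lemma comp_mono x x' y y' : x ⊑ x' -> y ⊑ y' -> x ⋅ y ⊑ x' ⋅ y'.
Proof.
  intros Hx Hy.
  apply le_trans with (x' ⋅ y); [apply comp_mono_l | apply comp_mono_r]; assumption.
Qed.

Lemma le_comp_top_r x : x ⊑ x ⋅ ⊤.
Proof. rewrite <- (comp_one_r S x) at 1. apply comp_mono_r, le_top. Qed.

Lemma le_comp_top_l x : x ⊑ ⊤ ⋅ x.
Proof. rewrite <- (comp_one_l S x) at 1. apply comp_mono_l, le_top. Qed.

Lemma top_comp_top : ⊤ ⋅ ⊤ = ⊤.
Proof. apply le_antisym; [apply le_top | apply le_comp_top_r]. Qed.

Lemma conv_mono x y : x ⊑ y -> conv S x ⊑ conv S y.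
Proof. unfold le. intro H. rewrite <- conv_sup, H. reflexivity. Qed.

Lemma conv_le_iff x y : conv S x ⊑ conv S y <-> x ⊑ y.
Proof.
  split; [|apply conv_mono].
  intro H. apply conv_mono in H. rewrite !conv_invol in H. exact H.
Qed.

Lemma conv_inf x y : conv S (x ⊓ y) = conv S x ⊓ conv S y.
Proof.
  apply le_antisym.
  - apply le_inf; apply conv_mono; [apply inf_le_l | apply inf_le_r].
  - rewrite <- conv_le_iff, conv_invol.
    apply le_inf; rewrite <- conv_le_iff, conv_invol; [apply inf_le_l | apply inf_le_r].
Qed.

Lemma dedekind_l x y z : x ⋅ y ⊓ z ⊑ x ⋅ (y ⊓ conv S x ⋅ z).
Proof. apply dedekind. Qed.

Lemma dedekind_r x y z : x ⋅ y ⊓ z ⊑ (x ⊓ z ⋅ conv S y) ⋅ y.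
Proof.
  rewrite <- conv_le_iff, conv_inf, !conv_comp, conv_inf, conv_comp, conv_invol.
  pose proof (dedekind_l (conv S y) (conv S x) (conv S z)) as H.
  rewrite conv_invol in H. exact H.
Qed.

Lemma vector_comp_le q x : vector S q -> q ⋅ x ⊑ q.
Proof. intro Hq. rewrite <- Hq at 2. apply comp_mono_r, le_top. Qed.

Lemma vector_inf p q : vector S p -> vector S q -> vector S (p ⊓ q).
Proof.
  intros Hp Hq. apply le_antisym; [|apply le_comp_top_r].
  apply le_inf.
  - rewrite <- Hp at 2. apply comp_mono_l, inf_le_l.
  - rewrite <- Hq at 2. apply comp_mono_l, inf_le_r.
Qed.

Lemma vector_ideal_top_comp r : vector S r -> ideal S (⊤ ⋅ r).
Proof.
  intro Hr. split.
  - unfold vector. rewrite <- comp_assoc, Hr. reflexivity.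
  - unfold covector. rewrite comp_assoc, top_comp_top. reflexivity.
Qed.

Lemma vector_disjoint_conv_comp p q : vector S p -> p ⊓ q = ⊥ -> conv S p ⋅ q = ⊥.
Proof.
  intros Hp Hpq. apply le_bot_eq.
  rewrite <- (inf_top S (conv S p ⋅ q)).
  eapply le_trans; [apply dedekind_l|].
  rewrite conv_invol, Hp, inf_comm, Hpq, comp_bot_r. apply le_refl.
Qed.

Lemma injective_inf_top_comp_le q p : injective S q -> q ⊓ ⊤ ⋅ (q ⊓ p) ⊑ p.
Proof.
  intro Hq. rewrite inf_comm.
  apply le_trans with (q ⋅ conv S (q ⊓ p) ⋅ (q ⊓ p)).
  - eapply le_trans; [apply dedekind_r|]. apply comp_mono_l, inf_le_r.
  - rewrite <- comp_assoc.
    apply le_trans with (q ⋅ (conv S q ⋅ p)).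
    + apply comp_mono_r, comp_mono; [apply conv_mono, inf_le_l | apply inf_le_r].
    + rewrite comp_assoc. rewrite <- (comp_one_l S p) at 2. apply comp_mono_l, Hq.
Qed.

Lemma surjective_comp_eq_bot q x : surjective S q -> q ⋅ x = ⊥ -> x = ⊥.
Proof.
  intros Hq Hqx. apply le_bot_eq.
  rewrite <- (comp_one_l S x), <- (comp_bot_r S (conv S q)), <- Hqx, comp_assoc.
  apply comp_mono_l, Hq.
Qed.

Lemma injective_surjective_le_eq p q :
  injective S p -> surjective S q -> q ⊑ p -> p = q.
Proof.
  intros Hp Hq Hqp. apply le_antisym; [|exact Hqp].
  rewrite <- (comp_one_r S p).
  apply le_trans with (p ⋅ conv S p ⋅ q).
  - rewrite <- comp_assoc. apply comp_mono_r.
    eapply le_trans; [exact Hq|]. apply comp_mono_l, conv_mono, Hqp.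
  - rewrite <- (comp_one_l S q) at 2. apply comp_mono_l, Hp.
Qed.

Lemma simple_ideal_eq_top x : simple_alg S -> ideal S x -> x <> ⊥ -> x = ⊤.
Proof.
  intros Hsimple [Hv Hc] Hx.
  pose proof (Hsimple x Hx) as Htop. unfold simple_elt in Htop.
  rewrite Hc, Hv in Htop. exact Htop.
Qed.

Lemma ideal_point_le_or_le_pc p q :
  ideal_point S p -> point S q -> q ⊑ p \/ q ⊑ pc S p.
Proof.
  intros [Hp Hideal] Hq.
  pose proof Hq as [Hq_inj [_ Hq_vec]].
  destruct (classic (⊤ ⋅ (q ⊓ p) = ⊥)) as [Hbot | Hnonbot].
  - right. apply le_pc_iff, le_bot_eq. rewrite <- Hbot. apply le_comp_top_l.
  - left. apply (Hideal q (⊤ ⋅ (q ⊓ p)) Hq); [| exact Hnonbot |].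
    + apply vector_ideal_top_comp, vector_inf; [exact Hq_vec | apply Hp].
    + eapply le_trans; [| apply (injective_inf_top_comp_le q p Hq_inj)].
      apply le_inf; [apply vector_comp_le, Hq_vec |].
      rewrite comp_assoc. apply comp_mono_l, le_top.
Qed.

Lemma point_le_or_le_pc_ideal_point p :
  point S p -> (forall q, point S q -> q ⊑ p \/ q ⊑ pc S p) -> ideal_point S p.
Proof.
  intros Hp Hdich. split; [exact Hp|].
  intros q x Hq _ Hx Hqx. destruct (Hdich q Hq) as [Hle | Hle_pc]; [exact Hle|].
  exfalso. apply Hx, (surjective_comp_eq_bot q x); [apply Hq|].
  apply le_bot_eq. rewrite <- (inf_pc p).
  apply le_inf; [exact Hqx|].
  eapply le_trans; [apply vector_comp_le, Hq | exact Hle_pc].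
Qed.

Lemma ideal_points_disjoint p q :
  ideal_point S p -> ideal_point S q -> p <> q -> p ⊓ q = ⊥.
Proof.
  intros Hp Hq Hpq.
  destruct (ideal_point_le_or_le_pc p q Hp (proj1 Hq)) as [Hle | Hle_pc].
  - exfalso. apply Hpq, injective_surjective_le_eq; [apply Hp | apply Hq | exact Hle].
  - rewrite inf_comm. apply le_pc_iff, Hle_pc.
Qed.

Lemma simple_point_ideal_point p : simple_alg S -> point S p -> ideal_point S p.
Proof.
  intros Hsimple Hp. split; [exact Hp|].
  intros q x Hq Hx Hx_nonbot Hqx.
  rewrite (simple_ideal_eq_top x Hsimple Hx Hx_nonbot), (proj2 (proj2 Hq)) in Hqx.
  exact Hqx.
Qed.

End StoneRelationAlgebra.

Theorem mainTheorem11 (S : StoneRelAlg) :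
  (forall p q : S, ideal_point S p -> ideal_point S q -> p <> q ->
     inf S p q = bot S /\ comp S (conv S p) q = bot S)
  /\ (simple_alg S -> forall p : S, point S p -> ideal_point S p)
  /\ (forall p : S, ideal_point S p <->
        (point S p /\ forall q : S, point S q -> le S q p \/ le S q (pc S p))).
Proof.
  split; [|split].
  - intros p q Hp Hq Hpq.
    pose proof (ideal_points_disjoint S p q Hp Hq Hpq) as Hdisj.
    split; [exact Hdisj|].
    apply vector_disjoint_conv_comp; [apply Hp | exact Hdisj].
  - intros Hsimple p. apply simple_point_ideal_point, Hsimple.
  - intro p. split.
    + intro Hp. split; [apply Hp|]. intro q. apply ideal_point_le_or_le_pc, Hp.
    + intros [Hp Hdich]. apply point_le_or_le_pc_ideal_point; assumption.
Qed.
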